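(* For every $n\ge1$, letting $\mathcal{A}^{(1)}_m$ denote the set of $1$-almost-increasing permutations in $S_m$, $$\mathcal{A}^{(1)}_{n+1}=\rho_{1,1}(\mathcal{A}^{(1)}_n)\cup\rho_{1,2}(\mathcal{A}^{(1)}_n)\cup\rho_{2,1}(\mathcal{A}^{(1)}_n)\cup\rho_{2,2}(\mathcal{A}^{(1)}_n).$$
   Context: A permutation $\pi\in S_m$ (one-line form) is $1$-almost-increasing if for every $i\in\{1,\dots,m\}$ there is at most one $j\le i$ with $\pi_j>i$; equivalently, $\pi$ avoids $4321,4312,3421,3412$. For $\pi\in S_n$ and $1\le i,j\le n+1$, $\rho_{i,j}(\pi)\in S_{n+1}$ is obtained by increasing by $1$ every entry of $\pi$ that is $\ge i$ and then inserting the value $i$ so that it occupies position $j$. *)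

(* Permutations of S_m are 'S_m = {perm 'I_m}; positions and
   values are 0-indexed (paper's value/position k corresponds to ordinal k-1). *)
From mathcomp Require Import all_boot all_order all_fingroup.
Set Implicit Arguments. Unset Strict Implicit. Unset Printing Implicit Defensive.

(* 1-almost-increasing: for every i in {1..m} at most one j <= i with pi_j > i.
   0-indexed with t = i-1 and p = j-1: #{p | p <= t and pi(p) > t} <= 1. *)
Definition almost_inc1 (m : nat) (s : 'S_m) : bool :=
  [forall t : 'I_m, #|[set p : 'I_m | (p <= t)%N && (t < s p)%N]| <= 1].

Definition A1 (m : nat) : {set 'S_m} := [set s : 'S_m | almost_inc1 s].

(* rho_{i,j}(pi): shift every value >= i up by one, insert value i at position j.
   0-indexed: position j gets value i; position q <> j (q = lift j k) gets
   value bump i (pi k). *)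
Definition rho_fun (n : nat) (i j : 'I_n.+1) (s : 'S_n) (q : 'I_n.+1) : 'I_n.+1 :=
  if unlift j q is Some k then lift i (s k) else i.

Lemma rho_fun_inj (n : nat) (i j : 'I_n.+1) (s : 'S_n) : injective (rho_fun i j s).
Proof.
move=> q1 q2; rewrite /rho_fun.
case: unliftP => [k1 ->|->]; case: unliftP => [k2 ->|->] //.
- by move/lift_inj/perm_inj ->.
- by move/eqP; rewrite eq_sym (negbTE (neq_lift _ _)).
- by move/eqP; rewrite (negbTE (neq_lift _ _)).
Qed.

Definition rho (n : nat) (i j : 'I_n.+1) (s : 'S_n) : 'S_n.+1 :=
  perm (@rho_fun_inj n i j s).

(** Inserting a new entry at position [j <= 1] with value [i <= 1] shifts by one every
    position and value that matters at a threshold [t + 1 >= 1], and the new entry never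
    exceeds such a threshold.  Hence the number of entries at positions [<= t + 1] with
    values [> t + 1] in [rho i j s] equals the corresponding number for [s] at threshold
    [t], while at threshold [0] at most one entry can count; so [rho i j] preserves
    1-almost-increasingness in both directions.  Conversely, every permutation
    is [rho (r j) j s] for the [s] obtained by deleting position [j], and a 1-almost-
    increasing [r] with [n + 1 >= 2] entries has [r j <= 1] for some [j <= 1], as
    otherwise both entries at positions 0 and 1 would exceed the threshold 1. *)
From mathcomp Require Import all_boot all_order all_fingroup.
From mathcomp Require Import zify.
Set Implicit Arguments. Unset Strict Implicit. Unset Printing Implicit Defensive.

Definition exceed_card (m : nat) (s : 'S_m) (t : nat) : nat :=
  #|[set p : 'I_m | (p <= t) && (t < s p)]|.

Lemma almost_inc1E (m : nat) (s : 'S_m) :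
  almost_inc1 s = [forall t : 'I_m, exceed_card s t <= 1].
Proof. by []. Qed.

Lemma exceed_card0_le1 (m : nat) (s : 'S_m) : exceed_card s 0 <= 1.
Proof.
case: m s => [|m] s; first by rewrite (leq_trans (max_card _)) // card_ord.
rewrite -(cards1 (@ord0 m)); apply: subset_leq_card; apply/subsetP => p.
by rewrite !inE => /andP[p_le0 _]; apply/eqP/val_inj => /=; lia.
Qed.

Lemma rhoE (n : nat) (i j : 'I_n.+1) (s : 'S_n) (q : 'I_n.+1) :
  rho i j s q = rho_fun i j s q.
Proof. by rewrite permE. Qed.

Lemma rho_lift (n : nat) (i j : 'I_n.+1) (s : 'S_n) (k : 'I_n) :
  rho i j s (lift j k) = lift i (s k).
Proof. by rewrite rhoE /rho_fun liftK. Qed.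

Lemma rho_at (n : nat) (i j : 'I_n.+1) (s : 'S_n) : rho i j s j = i.
Proof. by rewrite rhoE /rho_fun unlift_none. Qed.

Lemma exceed_card_rho (n : nat) (i j : 'I_n.+1) (s : 'S_n) (t : nat) :
  i <= 1 -> j <= 1 -> exceed_card (rho i j s) t.+1 = exceed_card s t.
Proof.
move=> i_le1 j_le1; rewrite /exceed_card -(card_imset _ (@lift_inj _ j)).
apply: eq_card => p; rewrite !inE.
case: (unliftP j p) => [k ->|->].
  rewrite (mem_imset _ _ (@lift_inj _ j)) inE rho_lift /= /bump.
  move: (s k) => v; case: k => k _ /=.
  by case: (leqP j k) => ?; case: (leqP i v) => ? /=;
    apply/idP/idP => /andP[? ?]; apply/andP; split; lia.
rewrite rho_at (_ : t.+1 < i = false) ?andbF; last by lia.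
by apply/esym/negbTE/imsetP => -[k _] /eqP; rewrite (negbTE (neq_lift _ _)).
Qed.

Lemma A1_rho (n : nat) (i j : 'I_n.+1) (s : 'S_n) :
  i <= 1 -> j <= 1 -> (rho i j s \in A1 n.+1) = (s \in A1 n).
Proof.
move=> i_le1 j_le1; rewrite !inE !almost_inc1E.
apply/forallP/forallP => s_inc t.
  by have := s_inc (lift ord0 t); rewrite /= /bump add1n exceed_card_rho.
case: (unliftP ord0 t) => [k ->|->]; last exact: exceed_card0_le1.
by rewrite /= /bump add1n exceed_card_rho //; apply: s_inc.
Qed.

Definition delete_fun (n : nat) (j : 'I_n.+1) (r : 'S_n.+1) (k : 'I_n) : 'I_n :=
  if unlift (r j) (r (lift j k)) is Some x then x else k.

Lemma lift_delete_fun (n : nat) (j : 'I_n.+1) (r : 'S_n.+1) (k : 'I_n) :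
  lift (r j) (delete_fun j r k) = r (lift j k).
Proof.
rewrite /delete_fun; case: unliftP => [x -> //|/perm_inj/eqP].
by rewrite eq_sym (negbTE (neq_lift _ _)).
Qed.

Lemma delete_fun_inj (n : nat) (j : 'I_n.+1) (r : 'S_n.+1) : injective (delete_fun j r).
Proof.
by move=> k1 k2 /(congr1 (lift (r j))); rewrite !lift_delete_fun => /perm_inj/lift_inj.
Qed.

Definition delete (n : nat) (j : 'I_n.+1) (r : 'S_n.+1) : 'S_n :=
  perm (@delete_fun_inj n j r).

Lemma rho_delete (n : nat) (j : 'I_n.+1) (r : 'S_n.+1) : rho (r j) j (delete j r) = r.
Proof.
apply/permP => q; case: (unliftP j q) => [k ->|->]; last exact: rho_at.
by rewrite rho_lift permE lift_delete_fun.
Qed.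

Lemma A1_small_entry (n : nat) (r : 'S_n.+1) :
  1 <= n -> r \in A1 n.+1 -> exists2 j : 'I_n.+1, j <= 1 & r j <= 1.
Proof.
move=> n_ge1; rewrite inE almost_inc1E => /forallP /(_ (inord 1)).
rewrite inordK; last by lia.
have one_val : (inord 1 : 'I_n.+1) = 1 :> nat by rewrite inordK //; lia.
case r0: (r ord0 <= 1); first by exists ord0.
case r1: (r (inord 1) <= 1); first by exists (inord 1); rewrite ?one_val.
have two_exceed : [set ord0; inord 1] \subset [set p : 'I_n.+1 | (p <= 1) && (1 < r p)].
  by apply/subsetP => p; rewrite !inE => /orP[]/eqP ->; rewrite ?one_val /=; lia.
have ord0_neq1 : ord0 != inord 1 :> 'I_n.+1 by rewrite -val_eqE /= one_val.
by move/(leq_trans (subset_leq_card two_exceed)); rewrite cards2 ord0_neq1.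
Qed.

Lemma A1_rhoP (n : nat) (r : 'S_n.+1) : 1 <= n ->
  reflect (exists i j : 'I_n.+1, exists2 s, [&& i <= 1, j <= 1 & s \in A1 n] & r = rho i j s)
          (r \in A1 n.+1).
Proof.
move=> n_ge1; apply: (iffP idP) => [r_inc | [i [j [s /and3P[i_le1 j_le1 s_inc] ->]]]].
  have [j j_le1 rj_le1] := A1_small_entry n_ge1 r_inc.
  exists (r j), j, (delete j r); last by rewrite rho_delete.
  by rewrite rj_le1 j_le1 -(A1_rho _ rj_le1 j_le1) rho_delete.
by rewrite A1_rho.
Qed.

Lemma ord_le1 (n : nat) (x : 'I_n.+1) : x <= 1 -> x = ord0 \/ x = inord 1.
Proof.
move=> x_le1; have x_lt := ltn_ord x.
by case: (posnP x) => x0; [left | right]; apply: val_inj; rewrite /= ?inordK; lia.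
Qed.

Theorem theorem7p4 (n : nat) (hn : (1 <= n)%N) :
  A1 n.+1 =
    [set rho ord0 ord0 s | s in A1 n] :|: [set rho ord0 (inord 1) s | s in A1 n]
    :|: [set rho (inord 1) ord0 s | s in A1 n]
    :|: [set rho (inord 1) (inord 1) s | s in A1 n].
Proof.
have one_le1 : (inord 1 : 'I_n.+1) <= 1 by rewrite inordK //; lia.
apply/setP => r; rewrite !in_setU; apply/(A1_rhoP _ hn)/idP.
  move=> [i [j [s /and3P[/ord_le1 i01 /ord_le1 j01 s_inc] ->]]].
  have mem_image a b : rho a b s \in [set rho a b s | s in A1 n] by apply: imset_f.
  by case: i01 => ->; case: j01 => ->; rewrite mem_image ?orbT.
move=> /orP[/orP[/orP[]|]|] /imsetP[s s_inc ->];
  by do 2 eexists; exists s; last reflexivity; rewrite s_inc ?one_le1.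
Qed.
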